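(* Consider the ODE system $$\frac{du}{dt}=\frac{a_1u}{1+fv}-b_1u^2-c_1uv,\qquad \frac{dv}{dt}=a_2v-b_2v^2-c_2uv,$$ with positive parameters $a_1,a_2,b_1,b_2,c_1,c_2$, and regard $f$ as the bifurcation parameter. Let $E_3=(0,v^* )$ with $v^*=\frac{a_2}{b_2}$, and let $$f^*=\frac{b_2(a_1b_2-a_2c_1)}{a_2^2c_1}.$$ If $$\frac{a_1f^*}{(1+f^*v^* )^2}+c_1-\frac{b_1b_2}{c_2}\neq0,$$ then the system undergoes a transcritical bifurcation around $E_3$ at $f=f^*$. *)

From Stdlib Require Import Reals Lra.
From Coquelicot Require Import Coquelicot.
Open Scope R_scope.

(* A planar vector field depending on a real parameter mu:
     x' = F mu x y,   y' = G mu x y. *)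

Definition equilibrium (F G : R -> R -> R -> R) (mu x y : R) : Prop :=
  F mu x y = 0 /\ G mu x y = 0.

Definition j11 (F : R -> R -> R -> R) mu x y := Derive (fun x' => F mu x' y) x.
Definition j12 (F : R -> R -> R -> R) mu x y := Derive (fun y' => F mu x y') y.

Definition partials_exist (F G : R -> R -> R -> R) (mu x y : R) : Prop :=
  ex_derive (fun x' => F mu x' y) x /\ ex_derive (fun y' => F mu x y') y /\
  ex_derive (fun x' => G mu x' y) x /\ ex_derive (fun y' => G mu x y') y.

Definition jac_eigenvalue (F G : R -> R -> R -> R) (mu x y : R) (l : C) : Prop :=
  Cminus (Cmult (Cminus l (RtoC (j11 F mu x y))) (Cminus l (RtoC (j12 G mu x y))))
         (RtoC (j12 F mu x y * j11 G mu x y)) = RtoC 0.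

Definition lin_stable (F G : R -> R -> R -> R) (mu x y : R) : Prop :=
  partials_exist F G mu x y /\
  forall l : C, jac_eigenvalue F G mu x y l -> Re l < 0.

Definition lin_unstable (F G : R -> R -> R -> R) (mu x y : R) : Prop :=
  partials_exist F G mu x y /\
  exists l : C, jac_eigenvalue F G mu x y l /\ 0 < Re l.

Definition transcritical_bifurcation (F G : R -> R -> R -> R) (mu0 x0 y0 : R) : Prop :=
  exists (delta eps : R) (p1 q1 p2 q2 : R -> R),
    0 < delta /\ 0 < eps /\
    p1 mu0 = x0 /\ q1 mu0 = y0 /\ p2 mu0 = x0 /\ q2 mu0 = y0 /\
    (forall mu, Rabs (mu - mu0) < delta ->
       continuous p1 mu /\ continuous q1 mu /\ continuous p2 mu /\ continuous q2 mu) /\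
    (forall mu, Rabs (mu - mu0) < delta ->
       equilibrium F G mu (p1 mu) (q1 mu) /\ equilibrium F G mu (p2 mu) (q2 mu)) /\
    (forall mu, Rabs (mu - mu0) < delta -> mu <> mu0 ->
       (p1 mu, q1 mu) <> (p2 mu, q2 mu)) /\
    (forall mu x y, Rabs (mu - mu0) < delta -> Rabs (x - x0) < eps ->
       Rabs (y - y0) < eps -> equilibrium F G mu x y ->
       (x = p1 mu /\ y = q1 mu) \/ (x = p2 mu /\ y = q2 mu)) /\
    (forall mu, mu0 - delta < mu < mu0 ->
       lin_stable F G mu (p1 mu) (q1 mu) /\ lin_unstable F G mu (p2 mu) (q2 mu)) /\
    (forall mu, mu0 < mu < mu0 + delta ->
       lin_unstable F G mu (p1 mu) (q1 mu) /\ lin_stable F G mu (p2 mu) (q2 mu)).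

Definition Fu (a1 b1 c1 : R) (f u v : R) : R :=
  a1 * u / (1 + f * v) - b1 * u ^ 2 - c1 * u * v.
Definition Gv (a2 b2 c2 : R) (f u v : R) : R :=
  a2 * v - b2 * v ^ 2 - c2 * u * v.

From Stdlib Require Import Reals Lra Psatz.
From Coquelicot Require Import Coquelicot.
Open Scope R_scope.

(* Equilibria near E3 = (0, vstar) with v > 0 lie on the v-nullcline v = vstar - (c2/b2) u, and
   there either u = 0 (E3 itself) or u is a root of a quadratic A(f) u^2 + B(f) u + C(f).  Its
   constant term C(f) = c1 vstar^2 (f - fstar) vanishes exactly at fstar, and B(fstar) is a nonzero
   multiple of the nondegeneracy quantity kappa, so the small root is a smooth branch through E3
   at fstar, the only other equilibrium nearby, and u has the sign of (f - fstar) kappa along it.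
   The Jacobian determinant on the branch is -c2 u v kappa and its trace is negative, while at E3
   the Jacobian is triangular with eigenvalues -a2 and c1 vstar^2 (fstar - f) / (1 + f vstar):
   the two branches exchange stability as f crosses fstar. *)

(** * Neighbourhoods, 2x2 spectra and quadratic roots *)

Lemma locally_gt_continuous (g : R -> R) x c :
  continuous g x -> c < g x -> locally x (fun y => c < g y).
Proof.
  intros Hg Hc. apply (Hg (fun z => c < z)).
  exact (locally_open _ _ (open_gt c) (fun _ h => h) _ Hc).
Qed.

Lemma locally_lt_continuous (g : R -> R) x c :
  continuous g x -> g x < c -> locally x (fun y => g y < c).
Proof.
  intros Hg Hc. apply (Hg (fun z => z < c)).
  exact (locally_open _ _ (open_lt c) (fun _ h => h) _ Hc).
Qed.

Lemma ex_derive_continuous_R (g : R -> R) x : ex_derive g x -> continuous g x.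
Proof. exact (@ex_derive_continuous R_AbsRing R_NormedModule g x). Qed.

Lemma locally_Rabs_lt x (P : R -> Prop) :
  locally x P -> exists delta, 0 < delta /\ forall y, Rabs (y - x) < delta -> P y.
Proof.
  intros [delta Hdelta]. exists delta. split; [apply cond_pos|].
  intros y Hy. apply Hdelta. exact Hy.
Qed.

Lemma lin_stable_of_trace_det F G mu x y :
  partials_exist F G mu x y ->
  j11 F mu x y + j12 G mu x y < 0 ->
  0 < j11 F mu x y * j12 G mu x y - j12 F mu x y * j11 G mu x y ->
  lin_stable F G mu x y.
Proof.
  intros HP Htr Hdet. split; [exact HP|]. intros [re im] Hl.
  unfold jac_eigenvalue in Hl.
  set (a := j11 F mu x y) in *; set (d := j12 G mu x y) in *.
  set (bc := j12 F mu x y * j11 G mu x y) in *.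
  apply (f_equal fst) in Hl as Hre. apply (f_equal snd) in Hl as Him. simpl in Hre, Him |- *.
  destruct (Req_dec im 0) as [->|Him0].
  - nra.
  - (* A non-real root has real part half the trace *)
    assert (2 * re - a - d = 0) by (apply (Rmult_eq_reg_l im); [nra | exact Him0]).
    lra.
Qed.

Lemma lin_unstable_of_det F G mu x y :
  partials_exist F G mu x y ->
  j11 F mu x y * j12 G mu x y - j12 F mu x y * j11 G mu x y < 0 ->
  lin_unstable F G mu x y.
Proof.
  intros HP Hdet. split; [exact HP|].
  set (a := j11 F mu x y) in *; set (d := j12 G mu x y) in *.
  set (b := j12 F mu x y) in *; set (c := j11 G mu x y) in *.
  set (disc := (a - d) ^ 2 + 4 * (b * c)).
  assert (Hdisc : (a + d) ^ 2 < disc) by (unfold disc; nra).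
  assert (Hs : sqrt disc * sqrt disc = disc)
    by (apply sqrt_sqrt; pose proof (pow2_ge_0 (a + d)); lra).
  assert (Htr : Rabs (a + d) < sqrt disc).
  { rewrite <- sqrt_Rsqr_abs, Rsqr_pow2. apply sqrt_lt_1_alt.
    split; [apply pow2_ge_0 | exact Hdisc]. }
  exists (RtoC ((a + d + sqrt disc) / 2)). split.
  - unfold jac_eigenvalue. fold a b c d.
    apply injective_projections; simpl; [|ring].
    transitivity ((sqrt disc * sqrt disc - (a - d) ^ 2) / 4 - b * c); [field|].
    rewrite Hs. unfold disc. field.
  - simpl. pose proof (Rle_abs (- (a + d))) as Hneg. rewrite Rabs_Ropp in Hneg. lra.
Qed.

Lemma lin_unstable_of_triangular F G mu x y :
  partials_exist F G mu x y -> j12 F mu x y = 0 -> 0 < j11 F mu x y ->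
  lin_unstable F G mu x y.
Proof.
  intros HP Hb0 Hpos. split; [exact HP|]. exists (RtoC (j11 F mu x y)). split.
  - unfold jac_eigenvalue. rewrite Hb0. apply injective_projections; simpl; ring.
  - exact Hpos.
Qed.

Lemma Rmult_le_of_le_div a b c : 0 < c -> a <= b / c -> a * c <= b.
Proof.
  intros Hc H. apply (Rmult_le_compat_r c) in H; [|lra].
  unfold Rdiv in H. rewrite Rmult_assoc, Rinv_l, Rmult_1_r in H; lra.
Qed.

Lemma Rmult_pos_sign_trans x y z : 0 < x * y -> 0 < y * z -> 0 < x * z.
Proof. intros Hxy Hyz. assert (0 < (x * z) * (y * y)) by nra. nra. Qed.

(* The root of A x^2 + B x + C that vanishes with C, in the cancellation-free form that stays
   smooth through A = 0. *)
Definition small_root A B C := -2 * C / (B * (1 + sqrt (1 - 4 * A * C / B ^ 2))).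

Lemma small_root_spec A B C : B <> 0 -> 0 <= 1 - 4 * A * C / B ^ 2 ->
  A * small_root A B C ^ 2 + B * small_root A B C + C = 0.
Proof.
  intros HB Hd. unfold small_root.
  set (s := sqrt (1 - 4 * A * C / B ^ 2)).
  assert (Hs : s * s = 1 - 4 * A * C / B ^ 2) by (apply sqrt_sqrt; exact Hd).
  assert (Hs0 : 0 <= s) by apply sqrt_pos.
  assert (HBs : B ^ 2 * (s * s) = B ^ 2 - 4 * A * C) by (rewrite Hs; field; exact HB).
  assert (H1s : 1 + s <> 0) by lra.
  transitivity (C * (4 * A * C + B ^ 2 * (s * s) - B ^ 2) / (B ^ 2 * (1 + s) ^ 2)).
  - field. split; assumption.
  - rewrite HBs. unfold Rdiv. ring.
Qed.

Lemma quadratic_roots_eq A B C x y :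
  A * x ^ 2 + B * x + C = 0 -> A * y ^ 2 + B * y + C = 0 ->
  Rabs A * (Rabs x + Rabs y) < Rabs B -> x = y.
Proof.
  intros Hx Hy Hsmall.
  assert (Hfac : (x - y) * (A * (x + y) + B) = 0)
    by (transitivity ((A * x ^ 2 + B * x + C) - (A * y ^ 2 + B * y + C)); [ring | lra]).
  assert (Hne : A * (x + y) + B <> 0).
  { intros H. assert (Rabs B <= Rabs A * (Rabs x + Rabs y)); [|lra].
    replace B with (- (A * (x + y))) by lra.
    rewrite Rabs_Ropp, Rabs_mult. apply Rmult_le_compat_l; [apply Rabs_pos | apply Rabs_triang]. }
  apply Rmult_integral in Hfac. destruct Hfac as [H|H]; [lra | contradiction].
Qed.

Lemma quadratic_root_sign A B C x :
  A * x ^ 2 + B * x + C = 0 -> Rabs (A * x) < Rabs B -> C <> 0 -> x * B * C < 0.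
Proof.
  intros Hx Hsmall HC.
  assert (HB : 0 < (A * x + B) * B).
  { assert (HBB : Rabs B * Rabs B = B * B)
      by (rewrite <- Rabs_mult; apply Rabs_pos_eq; nra).
    assert (Hcross : - (Rabs (A * x) * Rabs B) <= A * x * B).
    { rewrite <- Rabs_mult. pose proof (Rle_abs (- (A * x * B))) as H.
      rewrite Rabs_Ropp in H. lra. }
    assert (0 < Rabs B * (Rabs B - Rabs (A * x))).
    { pose proof (Rabs_pos (A * x)). apply Rmult_lt_0_compat; lra. }
    lra. }
  assert (Hx0 : x <> 0) by (intros ->; apply HC; lra).
  replace C with (- x * (A * x + B)) by lra.
  replace (x * B * (- x * (A * x + B))) with (- (x * x) * ((A * x + B) * B)) by ring.
  assert (0 < x * x) by (apply Rsqr_pos_lt; exact Hx0). nra.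
Qed.

Lemma jacobian_Fu_Gv a1 a2 b1 b2 c1 c2 f u v : 1 + f * v <> 0 ->
  partials_exist (Fu a1 b1 c1) (Gv a2 b2 c2) f u v /\
  j11 (Fu a1 b1 c1) f u v = a1 / (1 + f * v) - 2 * b1 * u - c1 * v /\
  j12 (Fu a1 b1 c1) f u v = - (a1 * u * f / (1 + f * v) ^ 2) - c1 * u /\
  j11 (Gv a2 b2 c2) f u v = - c2 * v /\
  j12 (Gv a2 b2 c2) f u v = a2 - 2 * b2 * v - c2 * u.
Proof.
  intros Hw.
  assert (Fu_u : is_derive (fun u' => Fu a1 b1 c1 f u' v) u
                   (a1 / (1 + f * v) - 2 * b1 * u - c1 * v))
    by (unfold Fu; auto_derive; [tauto | field; exact Hw]).
  assert (Fu_v : is_derive (fun v' => Fu a1 b1 c1 f u v') v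
                   (- (a1 * u * f / (1 + f * v) ^ 2) - c1 * u))
    by (unfold Fu; auto_derive; [tauto | field; exact Hw]).
  assert (Gv_u : is_derive (fun u' => Gv a2 b2 c2 f u' v) u (- c2 * v))
    by (unfold Gv; auto_derive; [exact I | ring]).
  assert (Gv_v : is_derive (fun v' => Gv a2 b2 c2 f u v') v (a2 - 2 * b2 * v - c2 * u))
    by (unfold Gv; auto_derive; [exact I | ring]).
  unfold partials_exist, j11, j12.
  repeat split; try (eexists; eassumption); apply is_derive_unique; assumption.
Qed.

(** * Equilibria of the model and their linearisation *)

Section Model.

Variables a1 a2 b1 b2 c1 c2 : R.
Hypotheses (ha1 : 0 < a1) (ha2 : 0 < a2) (hb1 : 0 < b1) (hb2 : 0 < b2)
  (hc1 : 0 < c1) (hc2 : 0 < c2).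

Local Notation F := (Fu a1 b1 c1).
Local Notation G := (Gv a2 b2 c2).

Definition vstar := a2 / b2.
Definition fstar := b2 * (a1 * b2 - a2 * c1) / (a2 ^ 2 * c1).
Definition slope := c2 / b2.

Definition kappa f v := a1 * f / (1 + f * v) ^ 2 + c1 - b1 * b2 / c2.

Definition interior_equilibrium f u v :=
  a1 = (1 + f * v) * (b1 * u + c1 * v) /\ a2 = b2 * v + c2 * u.

Lemma vstar_pos : 0 < vstar.
Proof. unfold vstar. apply Rdiv_lt_0_compat; assumption. Qed.

Lemma slope_pos : 0 < slope.
Proof. unfold slope. apply Rdiv_lt_0_compat; assumption. Qed.

Lemma a1_at_fstar : a1 = c1 * vstar * (1 + fstar * vstar).
Proof. unfold vstar, fstar. field. lra. Qed.

Lemma fstar_vstar_pos : 0 < 1 + fstar * vstar.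
Proof.
  pose proof vstar_pos. pose proof a1_at_fstar.
  assert (0 < c1 * vstar) by (apply Rmult_lt_0_compat; assumption). nra.
Qed.

Lemma equilibrium_E3 f : equilibrium F G f 0 vstar.
Proof. split; unfold Fu, Gv, vstar; [unfold Rdiv; ring | field; lra]. Qed.

Lemma equilibrium_of_interior f u v :
  interior_equilibrium f u v -> equilibrium F G f u v.
Proof.
  intros [E1 E2]. assert (Hw : 1 + f * v <> 0) by (intros H; rewrite H in E1; lra).
  split; unfold Fu, Gv.
  - rewrite E1 at 1. field. exact Hw.
  - rewrite E2. ring.
Qed.

Lemma equilibrium_cases f u v : 0 < v -> 0 < b1 * u + c1 * v ->
  equilibrium F G f u v -> (u = 0 /\ v = vstar) \/ interior_equilibrium f u v.
Proof.
  intros Hv Hpos [EF EG]. unfold Fu, Gv in EF, EG.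
  assert (Ha2 : a2 = b2 * v + c2 * u).
  { assert (Hprod : v * (a2 - b2 * v - c2 * u) = 0) by (rewrite <- EG; ring).
    apply Rmult_integral in Hprod. destruct Hprod; lra. }
  destruct (Req_dec u 0) as [->|Hu].
  - left. split; [reflexivity|]. unfold vstar. rewrite Ha2. field. lra.
  - right. split; [|exact Ha2].
    assert (Hprod : u * (a1 / (1 + f * v) - b1 * u - c1 * v) = 0)
      by (rewrite <- EF; unfold Rdiv; ring).
    apply Rmult_integral in Hprod. destruct Hprod as [|Hrate]; [contradiction|].
    (* Division by zero yields 0 in Rocq, so the u-nullcline equation forces 1 + f v <> 0. *)
    assert (Hw : 1 + f * v <> 0).
    { intros Hw. rewrite Hw in Hrate. unfold Rdiv in Hrate. rewrite Rinv_0 in Hrate. lra. }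
    replace a1 with (a1 / (1 + f * v) * (1 + f * v)) at 1 by (field; exact Hw).
    replace (a1 / (1 + f * v)) with (b1 * u + c1 * v) by lra. ring.
Qed.

Lemma interior_equilibrium_nullcline f u v :
  interior_equilibrium f u v -> v = vstar - slope * u.
Proof. intros [_ E2]. unfold vstar, slope. rewrite E2. field. lra. Qed.

Lemma jacobian_interior f u v : interior_equilibrium f u v ->
  partials_exist F G f u v /\
  j11 F f u v + j12 G f u v = - (b1 * u + b2 * v) /\
  j11 F f u v * j12 G f u v - j12 F f u v * j11 G f u v = - c2 * u * v * kappa f v.
Proof.
  intros [E1 E2]. assert (Hw : 1 + f * v <> 0) by (intros H; rewrite H in E1; lra).
  destruct (jacobian_Fu_Gv a1 a2 b1 b2 c1 c2 f u v Hw) as [HP [J11 [J12 [J21 J22]]]].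
  rewrite J11, J12, J21, J22.
  assert (Hrate : a1 / (1 + f * v) = b1 * u + c1 * v) by (rewrite E1; field; exact Hw).
  split; [exact HP|]. rewrite Hrate, E2. unfold kappa.
  split; [ring|]. field. lra.
Qed.

Lemma interior_lin_stable f u v : interior_equilibrium f u v -> 0 < v ->
  0 < b1 * u + b2 * v -> u * kappa f v < 0 -> lin_stable F G f u v.
Proof.
  intros He Hv Htr Hk. destruct (jacobian_interior f u v He) as [HP [Tr Det]].
  apply lin_stable_of_trace_det; [exact HP | lra |].
  rewrite Det. replace (- c2 * u * v * kappa f v) with (c2 * v * - (u * kappa f v)) by ring.
  apply Rmult_lt_0_compat; [apply Rmult_lt_0_compat|]; lra.
Qed.

Lemma interior_lin_unstable f u v : interior_equilibrium f u v -> 0 < v ->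
  0 < u * kappa f v -> lin_unstable F G f u v.
Proof.
  intros He Hv Hk. destruct (jacobian_interior f u v He) as [HP [_ Det]].
  apply lin_unstable_of_det; [exact HP|].
  rewrite Det. replace (- c2 * u * v * kappa f v) with (- (c2 * v * (u * kappa f v))) by ring.
  assert (0 < c2 * v * (u * kappa f v))
    by (apply Rmult_lt_0_compat; [apply Rmult_lt_0_compat|]; lra).
  lra.
Qed.

Lemma jacobian_E3 f : 0 < 1 + f * vstar ->
  partials_exist F G f 0 vstar /\
  j11 F f 0 vstar = c1 * vstar ^ 2 * (fstar - f) / (1 + f * vstar) /\
  j12 F f 0 vstar = 0 /\ j12 G f 0 vstar = - a2.
Proof.
  intros Hw. destruct (jacobian_Fu_Gv a1 a2 b1 b2 c1 c2 f 0 vstar ltac:(lra))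
    as [HP [J11 [J12 [_ J22]]]].
  rewrite J11, J12, J22. split; [exact HP|]. split; [|split].
  - rewrite a1_at_fstar at 1. field. lra.
  - unfold Rdiv. ring.
  - unfold vstar. field. lra.
Qed.

Lemma E3_lin_stable f : 0 < 1 + f * vstar -> fstar < f -> lin_stable F G f 0 vstar.
Proof.
  intros Hw Hf. destruct (jacobian_E3 f Hw) as [HP [J11 [J12 J22]]].
  assert (Hj : j11 F f 0 vstar < 0).
  { rewrite J11. unfold Rdiv. pose proof vstar_pos.
    assert (0 < c1 * vstar ^ 2 * (f - fstar) * / (1 + f * vstar)).
    { apply Rmult_lt_0_compat; [|apply Rinv_0_lt_compat; lra].
      apply Rmult_lt_0_compat; [apply Rmult_lt_0_compat; [lra | apply pow_lt; lra] | lra]. }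
    lra. }
  apply lin_stable_of_trace_det; [exact HP | lra |].
  rewrite J12, J22. nra.
Qed.

Lemma E3_lin_unstable f : 0 < 1 + f * vstar -> f < fstar -> lin_unstable F G f 0 vstar.
Proof.
  intros Hw Hf. destruct (jacobian_E3 f Hw) as [HP [J11 [J12 _]]].
  apply lin_unstable_of_triangular; [exact HP | exact J12 |].
  rewrite J11. pose proof vstar_pos.
  apply Rdiv_lt_0_compat; [|lra].
  apply Rmult_lt_0_compat; [apply Rmult_lt_0_compat; [lra | apply pow_lt; lra] | lra].
Qed.

(** * The bifurcating branch *)

Definition qa f := - f * slope * (b1 - c1 * slope).
Definition qb f := (1 + f * vstar) * (b1 - c1 * slope) - f * slope * c1 * vstar.
Definition qc f := c1 * vstar ^ 2 * (f - fstar).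

Lemma interior_equilibrium_quadratic f u :
  interior_equilibrium f u (vstar - slope * u) <-> qa f * u ^ 2 + qb f * u + qc f = 0.
Proof.
  assert (Hexp : (1 + f * (vstar - slope * u)) * (b1 * u + c1 * (vstar - slope * u)) - a1
                 = qa f * u ^ 2 + qb f * u + qc f)
    by (unfold qa, qb, qc; rewrite a1_at_fstar; ring).
  assert (Ha2 : a2 = b2 * (vstar - slope * u) + c2 * u) by (unfold vstar, slope; field; lra).
  unfold interior_equilibrium. split; [intros [E1 _] | intros E; split]; lra.
Qed.

Lemma qb_fstar : qb fstar = - (1 + fstar * vstar) * slope * kappa fstar vstar.
Proof.
  pose proof fstar_vstar_pos. pose proof vstar_pos.
  unfold qb, kappa, slope. rewrite a1_at_fstar. field. repeat split; lra.
Qed.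

Definition ubranch f := small_root (qa f) (qb f) (qc f).
Definition vbranch f := vstar - slope * ubranch f.

Lemma ubranch_fstar : ubranch fstar = 0.
Proof. unfold ubranch, small_root, qc. unfold Rdiv. ring. Qed.

Lemma vbranch_fstar : vbranch fstar = vstar.
Proof. unfold vbranch. rewrite ubranch_fstar. ring. Qed.

Lemma ex_derive_coefficients f : ex_derive qa f /\ ex_derive qb f /\ ex_derive qc f.
Proof. unfold qa, qb, qc. repeat split; auto_derive; exact I. Qed.

Lemma ex_derive_ubranch f : qb f <> 0 -> 0 < 1 - 4 * qa f * qc f / qb f ^ 2 ->
  ex_derive ubranch f.
Proof.
  intros Hb Hd. destruct (ex_derive_coefficients f) as [Da [Db Dc]].
  pose proof (sqrt_pos (1 - 4 * qa f * qc f / qb f ^ 2)).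
  unfold ubranch, small_root. auto_derive.
  repeat split; auto; unfold Rminus, Rdiv in *; simpl in *.
  apply Rmult_integral_contrapositive. split; lra.
Qed.

Hypothesis hkappa : kappa fstar vstar <> 0.

Lemma qb_fstar_neq0 : qb fstar <> 0.
Proof.
  rewrite qb_fstar. pose proof fstar_vstar_pos. pose proof slope_pos.
  apply Rmult_integral_contrapositive_currified; [|exact hkappa].
  apply Rmult_integral_contrapositive_currified; lra.
Qed.

(* The first bound keeps v and b1 u + c1 v positive on the box, the second keeps the other
   root of the quadratic out of it. *)
Definition eps := Rmin (c1 * vstar / (b1 + c1)) (Rabs (qb fstar) / (4 * (Rabs (qa fstar) + 1))).

Lemma eps_spec :
  0 < eps /\ eps * (b1 + c1) <= c1 * vstar /\ eps * (4 * (Rabs (qa fstar) + 1)) <= Rabs (qb fstar).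
Proof.
  pose proof vstar_pos. pose proof (Rabs_pos (qa fstar)).
  pose proof (Rabs_pos_lt _ qb_fstar_neq0).
  unfold eps. split; [|split].
  - apply Rmin_pos; apply Rdiv_lt_0_compat; try lra. apply Rmult_lt_0_compat; lra.
  - apply Rmult_le_of_le_div; [lra | apply Rmin_l].
  - apply Rmult_le_of_le_div; [lra | apply Rmin_r].
Qed.

Lemma box_positive x y : Rabs x < eps -> Rabs (y - vstar) < eps ->
  0 < y /\ 0 < b1 * x + c1 * y.
Proof.
  intros Hx Hy. destruct eps_spec as [He [Hbox _]]. pose proof vstar_pos.
  apply Rabs_def2 in Hx. apply Rabs_def2 in Hy. split; nra.
Qed.

Definition near_fstar mu :=
  qb fstar ^ 2 / 2 < qb fstar * qb mu /\
  Rabs (qa mu) < Rabs (qa fstar) + 1 /\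
  0 < 1 - 4 * qa mu * qc mu / qb mu ^ 2 /\
  Rabs ((1 + slope) * ubranch mu) < eps /\
  0 < 1 + mu * vstar /\
  0 < b1 * ubranch mu + b2 * vbranch mu /\
  0 < kappa fstar vstar * kappa mu (vbranch mu).

Lemma locally_near_fstar : locally fstar near_fstar.
Proof.
  destruct (ex_derive_coefficients fstar) as [Da [Db Dc]].
  pose proof qb_fstar_neq0 as Hb.
  assert (Hc : qc fstar = 0) by (unfold qc; ring).
  assert (Du : ex_derive ubranch fstar).
  { apply ex_derive_ubranch; [exact Hb|]. rewrite Hc. unfold Rdiv. lra. }
  assert (Dv : ex_derive vbranch fstar) by (unfold vbranch; auto_derive; auto).
  pose proof (Rsqr_pos_lt _ Hb) as Hb2. pose proof (Rsqr_pos_lt _ hkappa) as Hk2.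
  unfold Rsqr in Hb2, Hk2.
  pose proof vstar_pos. pose proof fstar_vstar_pos. pose proof (proj1 eps_spec).
  unfold near_fstar. repeat apply filter_and.
  - apply locally_gt_continuous; [apply ex_derive_continuous_R; auto_derive; auto | nra].
  - apply locally_lt_continuous; [|lra].
    exact (continuous_Rabs_comp _ _ (ex_derive_continuous_R _ _ Da)).
  - apply locally_gt_continuous.
    + apply ex_derive_continuous_R. auto_derive. repeat split; auto.
    + rewrite Hc. unfold Rdiv. lra.
  - apply locally_lt_continuous.
    + apply continuous_Rabs_comp, ex_derive_continuous_R. auto_derive. auto.
    + rewrite ubranch_fstar, Rmult_0_r, Rabs_R0. assumption.
  - apply locally_gt_continuous; [apply ex_derive_continuous_R; auto_derive; auto | lra].
  - apply locally_gt_continuous.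
    + apply ex_derive_continuous_R. auto_derive. auto.
    + rewrite ubranch_fstar, vbranch_fstar. nra.
  - apply locally_gt_continuous.
    + apply ex_derive_continuous_R. unfold kappa. auto_derive. repeat split; auto.
      rewrite vbranch_fstar, Rmult_1_r. apply Rmult_integral_contrapositive_currified; lra.
    + rewrite vbranch_fstar. exact Hk2.
Qed.

Lemma near_fstar_qb mu : near_fstar mu -> Rabs (qb fstar) / 2 < Rabs (qb mu).
Proof.
  intros [Hb _]. pose proof (Rabs_pos_lt _ qb_fstar_neq0).
  assert (Hprod : qb fstar * qb mu <= Rabs (qb fstar) * Rabs (qb mu))
    by (rewrite <- Rabs_mult; apply Rle_abs).
  assert (Hsq : qb fstar ^ 2 = Rabs (qb fstar) ^ 2)
    by (rewrite RPow_abs; symmetry; apply Rabs_pos_eq, pow2_ge_0).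
  nra.
Qed.

Lemma near_fstar_root mu : near_fstar mu ->
  qa mu * ubranch mu ^ 2 + qb mu * ubranch mu + qc mu = 0.
Proof.
  intros Hn. pose proof (near_fstar_qb mu Hn) as Hb. pose proof (Rabs_pos (qb fstar)).
  destruct Hn as (_ & _ & Hd & _).
  apply small_root_spec; [|lra].
  intros Hzero. rewrite Hzero, Rabs_R0 in Hb. lra.
Qed.

Lemma near_fstar_interior mu : near_fstar mu ->
  interior_equilibrium mu (ubranch mu) (vbranch mu).
Proof. intros Hn. apply interior_equilibrium_quadratic, near_fstar_root, Hn. Qed.

Lemma near_fstar_branch_box mu : near_fstar mu ->
  Rabs (ubranch mu) < eps /\ Rabs (vbranch mu - vstar) < eps.
Proof.
  intros (_ & _ & _ & Hu & _). pose proof slope_pos. pose proof (Rabs_pos (ubranch mu)).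
  rewrite Rabs_mult, (Rabs_pos_eq (1 + slope)) in Hu by lra.
  replace (vbranch mu - vstar) with (- slope * ubranch mu) by (unfold vbranch; ring).
  rewrite Rabs_mult, Rabs_Ropp, (Rabs_pos_eq slope) by lra.
  split; nra.
Qed.

Lemma near_fstar_bound mu x : near_fstar mu -> Rabs x < eps ->
  Rabs (qa mu) * (Rabs x + Rabs (ubranch mu)) < Rabs (qb mu).
Proof.
  intros Hn Hx. pose proof (near_fstar_qb mu Hn) as Hb.
  destruct (near_fstar_branch_box mu Hn) as [Hu _].
  destruct eps_spec as [He [_ Heps]]. destruct Hn as (_ & Ha & _).
  pose proof (Rabs_pos x). pose proof (Rabs_pos (ubranch mu)). pose proof (Rabs_pos (qa mu)).
  assert (Rabs (qa mu) * (Rabs x + Rabs (ubranch mu)) <= (Rabs (qa fstar) + 1) * (2 * eps)).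
  { apply Rmult_le_compat; lra. }
  lra.
Qed.

Lemma near_fstar_equilibria mu x y : near_fstar mu -> Rabs x < eps -> Rabs (y - vstar) < eps ->
  equilibrium F G mu x y -> (x = ubranch mu /\ y = vbranch mu) \/ (x = 0 /\ y = vstar).
Proof.
  intros Hn Hx Hy He. destruct (box_positive x y Hx Hy) as [Hy0 Hpos].
  destruct (equilibrium_cases mu x y Hy0 Hpos He) as [HE3 | Hint]; [right; exact HE3 | left].
  rewrite (interior_equilibrium_nullcline _ _ _ Hint) in Hint |- *.
  apply interior_equilibrium_quadratic in Hint.
  assert (Hx_eq : x = ubranch mu).
  { apply (quadratic_roots_eq (qa mu) (qb mu) (qc mu));
      [exact Hint | apply near_fstar_root, Hn | apply near_fstar_bound; assumption]. }
  unfold vbranch. rewrite Hx_eq. split; reflexivity.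
Qed.

Lemma near_fstar_sign mu : near_fstar mu -> mu <> fstar ->
  0 < (mu - fstar) * (ubranch mu * kappa mu (vbranch mu)).
Proof.
  intros Hn Hne. pose proof (near_fstar_root mu Hn) as Hroot.
  assert (Hsmall : Rabs (qa mu * ubranch mu) < Rabs (qb mu)).
  { pose proof (near_fstar_bound mu (ubranch mu) Hn (proj1 (near_fstar_branch_box mu Hn))).
    pose proof (Rabs_pos (qa mu)). pose proof (Rabs_pos (ubranch mu)).
    rewrite Rabs_mult. nra. }
  pose proof vstar_pos. pose proof slope_pos. pose proof fstar_vstar_pos.
  assert (Hc : 0 < c1 * vstar ^ 2) by (apply Rmult_lt_0_compat; [lra | apply pow_lt; lra]).
  assert (Hqc : qc mu <> 0)
    by (unfold qc; apply Rmult_integral_contrapositive_currified; lra).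
  (* The small root has the sign of - B C, and B = qb mu has the sign of - kappa near fstar. *)
  pose proof (quadratic_root_sign _ _ _ _ Hroot Hsmall Hqc) as Hsign.
  destruct Hn as (Hb & _ & _ & _ & _ & _ & Hk).
  rewrite qb_fstar in Hb. unfold qc in Hsign.
  assert (Hu : 0 < (mu - fstar) * ubranch mu * - qb mu).
  { apply (Rmult_lt_reg_r (c1 * vstar ^ 2)); [exact Hc|]. nra. }
  assert (Hkb : 0 < - qb mu * kappa fstar vstar).
  { assert (0 < (1 + fstar * vstar) * slope) by (apply Rmult_lt_0_compat; lra).
    apply (Rmult_lt_reg_r ((1 + fstar * vstar) * slope)); [assumption|].
    pose proof (pow2_ge_0 (- (1 + fstar * vstar) * slope * kappa fstar vstar)).
    replace (- qb mu * kappa fstar vstar * ((1 + fstar * vstar) * slope))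
      with (- (1 + fstar * vstar) * slope * kappa fstar vstar * qb mu) by ring.
    lra. }
  pose proof (Rmult_pos_sign_trans _ _ _ (Rmult_pos_sign_trans _ _ _ Hu Hkb) Hk). nra.
Qed.

Lemma near_fstar_vbranch_pos mu : near_fstar mu -> 0 < vbranch mu.
Proof.
  intros Hn. destruct (near_fstar_branch_box mu Hn) as [Hu Hv].
  exact (proj1 (box_positive _ _ Hu Hv)).
Qed.

Lemma near_fstar_branch_stable mu : near_fstar mu -> mu < fstar ->
  lin_stable F G mu (ubranch mu) (vbranch mu).
Proof.
  intros Hn Hlt. pose proof (near_fstar_sign mu Hn ltac:(lra)) as Hs.
  apply interior_lin_stable.
  - apply near_fstar_interior, Hn.
  - apply near_fstar_vbranch_pos, Hn.
  - apply Hn.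
  - nra.
Qed.

Lemma near_fstar_branch_unstable mu : near_fstar mu -> fstar < mu ->
  lin_unstable F G mu (ubranch mu) (vbranch mu).
Proof.
  intros Hn Hgt. pose proof (near_fstar_sign mu Hn ltac:(lra)) as Hs.
  apply interior_lin_unstable.
  - apply near_fstar_interior, Hn.
  - apply near_fstar_vbranch_pos, Hn.
  - nra.
Qed.

Lemma near_fstar_continuous mu : near_fstar mu -> continuous ubranch mu /\ continuous vbranch mu.
Proof.
  intros Hn. pose proof (near_fstar_qb mu Hn) as Hb. pose proof (Rabs_pos (qb fstar)).
  assert (Du : ex_derive ubranch mu).
  { apply ex_derive_ubranch; [|apply Hn]. intros Hzero. rewrite Hzero, Rabs_R0 in Hb. lra. }
  split; apply ex_derive_continuous_R; [exact Du | unfold vbranch; auto_derive; auto].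
Qed.

Theorem transcritical_at_E3 : transcritical_bifurcation F G fstar 0 vstar.
Proof.
  destruct (locally_Rabs_lt _ _ locally_near_fstar) as [delta [Hdelta Hnear]].
  assert (Hleft : forall mu, fstar - delta < mu < fstar -> near_fstar mu)
    by (intros mu Hmu; apply Hnear, Rabs_def1; lra).
  assert (Hright : forall mu, fstar < mu < fstar + delta -> near_fstar mu)
    by (intros mu Hmu; apply Hnear, Rabs_def1; lra).
  exists delta, eps, ubranch, vbranch, (fun _ => 0), (fun _ => vstar).
  split; [exact Hdelta|]. split; [apply eps_spec|].
  split; [exact ubranch_fstar|]. split; [exact vbranch_fstar|].
  split; [reflexivity|]. split; [reflexivity|].
  split; [|split; [|split; [|split; [|split]]]].
  - intros mu Hmu. destruct (near_fstar_continuous mu (Hnear mu Hmu)).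
    repeat split; auto using continuous_const.
  - intros mu Hmu. split; [|apply equilibrium_E3].
    apply equilibrium_of_interior, near_fstar_interior, Hnear, Hmu.
  - intros mu Hmu Hne Heq. injection Heq as Hu _.
    pose proof (near_fstar_sign mu (Hnear mu Hmu) Hne) as Hs. rewrite Hu in Hs. lra.
  - intros mu x y Hmu Hx. rewrite Rminus_0_r in Hx.
    exact (near_fstar_equilibria mu x y (Hnear mu Hmu) Hx).
  - intros mu Hmu. pose proof (Hleft mu Hmu) as Hn. split.
    + apply near_fstar_branch_stable; [exact Hn | lra].
    + apply E3_lin_unstable; [apply Hn | lra].
  - intros mu Hmu. pose proof (Hright mu Hmu) as Hn. split.
    + apply near_fstar_branch_unstable; [exact Hn | lra].
    + apply E3_lin_stable; [apply Hn | lra].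
Qed.

End Model.

Theorem mainTheorem12 (a1 a2 b1 b2 c1 c2 : R)
  (ha1 : 0 < a1) (ha2 : 0 < a2) (hb1 : 0 < b1) (hb2 : 0 < b2)
  (hc1 : 0 < c1) (hc2 : 0 < c2) :
  let vstar := a2 / b2 in
  let fstar := b2 * (a1 * b2 - a2 * c1) / (a2 ^ 2 * c1) in
  a1 * fstar / (1 + fstar * vstar) ^ 2 + c1 - b1 * b2 / c2 <> 0 ->
  transcritical_bifurcation (Fu a1 b1 c1) (Gv a2 b2 c2) fstar 0 vstar.
Proof.
  intros vstar fstar Hkappa.
  exact (transcritical_at_E3 a1 a2 b1 b2 c1 c2 ha1 ha2 hb1 hb2 hc1 hc2 Hkappa).
Qed.
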